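(* If $\Delta$ and $\Theta$ are deterministic, then $p\cdot\Delta + (1-p)\cdot\Theta$ is deterministic for every probability $p$.
   Context: Distributions are over lqCCS extended configurations $\langle\!\langle \rho, P, R \rangle\!\rangle$ (density operator, process, observer) and a deadlock configuration $\bot$. Contexts $O[\cdot] = [\cdot] \parallel R'$ add an observer $R'$ (a process without $\tau$ and restriction whose sums are only sums of inputs on distinct channels). $\rightsquigarrow_\pi$ is the enhanced semantics with index $\pi = \diamond$ (only the process moves) or $\pi \in \{\ell,r\}^*$ (naming the observer component that acts), lifted to distributions by linearity so that all configurations in the support move with the same index; it is decomposable with respect to convex combinations. Constrained saturated bisimilarity $\sim_{cs}$ is the largest relation that, for every context, preserves barbs and matches indexed moves with related results, and it is linear (closed under convex combinations). A set $\mathcal{A}$ of distributions is deterministic if for every $\Delta \in \mathcal{A}$, every context $O[\cdot]$ and index $\pi$, whenever $O[\Delta] \rightsquigarrow_\pi \Delta'$ and $O[\Delta] \rightsquigarrow_\pi \Delta''$ then $\Delta' \sim_{cs} \Delta''$ and $\Delta', \Delta'' \in \mathcal{A}$; a distribution is deterministic if it belongs to some deterministic set. *)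

From HB Require Import structures.
From mathcomp Require Import all_boot all_order all_algebra.
From mathcomp Require Import boolp classical_sets cardinality fsbigop reals.
Set Implicit Arguments. Unset Strict Implicit. Unset Printing Implicit Defensive.
Import Order.TTheory GRing.Theory Num.Theory.
Local Open Scope classical_set_scope.
Local Open Scope ring_scope.

(* Abstract lqCCS setting:
   - Conf : extended configurations <<rho,P,R>> together with the deadlock bot;
   - Ctx  : contexts O[.] = [.] || R' ;  plug O c = O[c]  (on configurations);
   - Idx  : indices pi (diamond or words over {l,r});
   - step c pi Theta : the enhanced semantics  c ~>_pi Theta  on configurations. *)

Definition dist (R : realType) (Conf : choiceType) := Conf -> R.

Definition dirac (R : realType) (Conf : choiceType) (c : Conf) : dist R Conf :=
  fun x => (x == c)%:R.

Definition cvx (R : realType) (Conf : choiceType) (p : R) (D T : dist R Conf)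
  : dist R Conf := fun x => p * D x + (1 - p) * T x.

Definition is_dist (R : realType) (Conf : choiceType) (D : dist R Conf) : Prop :=
  [/\ (forall x, 0 <= D x),
      finite_set [set x | D x != 0] &
      \sum_(x \in [set: Conf]) D x = 1].

Definition push (R : realType) (Conf : choiceType) (Ctx : Type)
  (plug : Ctx -> Conf -> Conf) (O : Ctx) (D : dist R Conf) : dist R Conf :=
  fun y => \sum_(x \in [set x | plug O x = y]) D x.

(* lifting of the indexed semantics to distributions by linearity:
   D = sum_i w_i . dirac c_i,  c_i ~>_pi T_i  (same pi for all i),
   D' = sum_i w_i . T_i,  with w_i > 0 and sum_i w_i = 1 *)
Definition lift (R : realType) (Conf : choiceType) (Idx : Type)
  (step : Conf -> Idx -> dist R Conf -> Prop) (pi : Idx)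
  (D D' : dist R Conf) : Prop :=
  exists s : seq (R * Conf * dist R Conf),
    [/\ (forall t, t \in s -> 0 < t.1.1),
        \sum_(t <- s) t.1.1 = 1,
        (forall t, t \in s -> step t.1.2 pi t.2),
        D = (fun x => \sum_(t <- s) t.1.1 * @dirac R Conf t.1.2 x) &
        D' = (fun x => \sum_(t <- s) t.1.1 * t.2 x)].

Definition deterministic_set (R : realType) (Conf : choiceType) (Ctx Idx : Type)
  (plug : Ctx -> Conf -> Conf) (step : Conf -> Idx -> dist R Conf -> Prop)
  (bisim : dist R Conf -> dist R Conf -> Prop) (A : set (dist R Conf)) : Prop :=
  (forall D, A D -> is_dist D) /\
  forall D, A D -> forall (O : Ctx) (pi : Idx) (D' D'' : dist R Conf),
    lift step pi (push plug O D) D' -> lift step pi (push plug O D) D'' ->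
    [/\ bisim D' D'', A D' & A D''].

Definition deterministic (R : realType) (Conf : choiceType) (Ctx Idx : Type)
  (plug : Ctx -> Conf -> Conf) (step : Conf -> Idx -> dist R Conf -> Prop)
  (bisim : dist R Conf -> dist R Conf -> Prop) (D : dist R Conf) : Prop :=
  exists A : set (dist R Conf), deterministic_set plug step bisim A /\ A D.

Definition bisim_linear (R : realType) (Conf : choiceType)
  (bisim : dist R Conf -> dist R Conf -> Prop) : Prop :=
  forall (p : R) (D1 D2 T1 T2 : dist R Conf), 0 <= p <= 1 ->
    bisim D1 T1 -> bisim D2 T2 -> bisim (cvx p D1 D2) (cvx p T1 T2).

(* Take as witness the set of all convex combinations q.D' + (1-q).T' of
   members D', T' of deterministic sets for D and T. Plugging into a context
   commutes with convex combinations, and the lifted semantics decomposes: in a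
   transition of M = q.a + (1-q).b, every weighted transition from a source c
   splits along the shares q.a(c)/M(c) and (1-q).b(c)/M(c), giving transitions
   of a and of b whose targets recombine with the same q. Two transitions of
   q.a + (1-q).b thus yield, componentwise, two transitions of a and two of b,
   which determinism of each part makes bisimilar and keeps in the witness;
   linearity of bisimilarity recombines them. For q = 0 or 1 the combination is
   a member of one of the two sets. *)

From Pilot Require Import Defs.
From HB Require Import structures.
From mathcomp Require Import all_boot all_order all_algebra.
From mathcomp Require Import boolp classical_sets cardinality fsbigop reals.
From mathcomp Require Import ring.
Set Implicit Arguments. Unset Strict Implicit. Unset Printing Implicit Defensive.
Import Order.TTheory GRing.Theory Num.Theory.
Local Open Scope ring_scope.
Local Open Scope classical_set_scope.

Section Distributions.
Variables (R : realType) (Conf : choiceType).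
Implicit Types (D T : dist R Conf) (p : R).

Lemma fsum_seqE (F : Conf -> R) (L : seq Conf) (A : set Conf) :
  uniq L -> (forall x, F x != 0 -> x \in L) ->
  \sum_(x \in A) F x = \sum_(x <- L | x \in A) F x.
Proof.
move=> uL FL; rewrite (bigfs _ _ (P := fun x => x \in A)) ?set_mem_set//.
by move=> x _; apply: contraNeq; apply: FL.
Qed.

Lemma cvx0 D T : cvx 0 D T = T.
Proof. by apply: funext => x; rewrite /cvx mul0r add0r subr0 mul1r. Qed.

Lemma cvx1 D T : cvx 1 D T = D.
Proof. by apply: funext => x; rewrite /cvx mul1r subrr mul0r addr0. Qed.

Lemma cvx_supp p D T :
  [set x | cvx p D T x != 0] `<=` [set x | D x != 0] `|` [set x | T x != 0].
Proof.
move=> x /= cx; have [Dx|] := eqVneq (D x) 0; last by left.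
by right; apply: contraNneq cx => Tx; rewrite /cvx Dx Tx !mulr0 addr0.
Qed.

Lemma fsum_cvx p D T (A : set Conf) :
  finite_set [set x | D x != 0] -> finite_set [set x | T x != 0] ->
  \sum_(x \in A) cvx p D T x =
  p * \sum_(x \in A) D x + (1 - p) * \sum_(x \in A) T x.
Proof.
move=> finD finT; set U := [set x | D x != 0] `|` [set x | T x != 0].
have finAU : finite_set (A `&` U) by apply: finite_setIr; rewrite finite_setU.
have sumAU (F : Conf -> R) : [set x | F x != 0] `<=` U ->
    \sum_(x \in A) F x = \sum_(x \in A `&` U) F x.
  move=> FU; rewrite (fsbig_widen (A `&` U) A F) // => x [Ax /not_andP[//|xNU]].
  by apply: contra_notP xNU => /eqP; apply: FU.
rewrite (sumAU _ (@cvx_supp p D T)) (sumAU D) => [|x]; last by left.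
rewrite (sumAU T) => [|x]; last by right.
by rewrite fsbig_split // -!mulr_fsumr.
Qed.

Lemma is_dist_cvx p D T :
  0 <= p <= 1 -> is_dist D -> is_dist T -> is_dist (cvx p D T).
Proof.
move=> /andP[p0 p1] [D0 finD sumD] [T0 finT sumT]; split.
- by move=> x; rewrite /cvx addr_ge0 // mulr_ge0 // subr_ge0.
- by apply: sub_finite_set (@cvx_supp p D T) _; rewrite finite_setU.
- by rewrite fsum_cvx // sumD sumT !mulr1 addrC subrK.
Qed.

Definition mix (I : Type) (s : seq I) (w : I -> R) (c : I -> Conf) : dist R Conf :=
  fun x => \sum_(i <- s) w i * dirac R (c i) x.

Lemma mix_supp (I : eqType) (s : seq I) w c x : mix s w c x != 0 -> x \in map c s.
Proof.
apply: contraNT => xNs; rewrite /mix big1_seq // => i /andP[_ si].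
suff /negbTE xNci : x != c i by rewrite /dirac xNci mulr0.
by apply: contraNneq xNs => ->; rewrite map_f.
Qed.

Lemma mix_gt0 (I : eqType) (s : seq I) w c i :
  (forall j, j \in s -> 0 < w j) -> i \in s -> 0 < mix s w c (c i).
Proof.
move=> w0 si; rewrite /mix (big_rem _ si) /= /dirac eqxx mulr1 ltr_wpDr ?w0 //.
rewrite big_seq sumr_ge0 // => j /mem_rem js.
by rewrite mulr_ge0 ?ler0n // ltW ?w0.
Qed.

Lemma fsum_mix (I : eqType) (s : seq I) w c :
  \sum_(x \in [set: Conf]) mix s w c x = \sum_(i <- s) w i.
Proof.
have uL := undup_uniq (map c s).
rewrite (fsum_seqE _ uL) => [|x /mix_supp]; last by rewrite mem_undup.
under eq_bigl do rewrite in_setT.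
rewrite /mix exchange_big /=; apply: eq_big_seq => i si.
rewrite -mulr_sumr (bigD1_seq (c i)) ?mem_undup ?map_f //= /dirac eqxx.
by rewrite big1 ?addr0 ?mulr1 // => y /negbTE ->.
Qed.

Lemma is_dist_mix (I : eqType) (s : seq I) w c :
  (forall i, i \in s -> 0 <= w i) -> \sum_(i <- s) w i = 1 -> is_dist (mix s w c).
Proof.
move=> w0 w1; split; last by rewrite fsum_mix.
- move=> x; rewrite /mix big_seq sumr_ge0 // => i si.
  by rewrite mulr_ge0 ?ler0n ?w0.
- by apply: sub_finite_set (finite_seq (map c s)) => x /mix_supp.
Qed.

Section Push.
Variables (Ctx : Type) (plug : Ctx -> Conf -> Conf) (O : Ctx).

Lemma push_cvx p D T :
  finite_set [set x | D x != 0] -> finite_set [set x | T x != 0] ->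
  push plug O (cvx p D T) = cvx p (push plug O D) (push plug O T).
Proof. by move=> finD finT; apply: funext => y; rewrite /push fsum_cvx. Qed.

Lemma push_mixE D (L : seq Conf) : uniq L -> (forall x, D x != 0 -> x \in L) ->
  push plug O D = mix L D (plug O).
Proof.
move=> uL DL; apply: funext => y; rewrite /push /mix (fsum_seqE _ uL DL) big_mkcond /=.
apply: eq_bigr => x _; rewrite /dirac.
have [<-|neq] := eqVneq (plug O x) y; first by rewrite mem_set // mulr1.
by rewrite memNset ?mulr0 //= => /eqP; rewrite (negbTE neq).
Qed.

Lemma is_dist_push D : is_dist D -> is_dist (push plug O D).
Proof.
case=> D0 finD sumD; set L := finmap.enum_fset (fset_set [set x | D x != 0]).
have DL x : D x != 0 -> x \in L by move=> Dx; rewrite in_fset_set // mem_set.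
rewrite (push_mixE (finmap.fset_uniq _) DL); apply: is_dist_mix => [x _|] //.
rewrite -sumD (fsum_seqE _ (finmap.fset_uniq _) DL).
by under [RHS]eq_bigl do rewrite in_setT.
Qed.

End Push.

Section Lift.
Variables (Idx : Type) (step : Conf -> Idx -> dist R Conf -> Prop) (pi : Idx).
Implicit Types (s : seq (R * Conf * dist R Conf)) (a b : dist R Conf).

Definition lift_src s : dist R Conf := mix s (fun t => t.1.1) (fun t => t.1.2).

Definition lift_tgt s : dist R Conf := fun x => \sum_(t <- s) t.1.1 * t.2 x.

(* Transitions whose source lies outside the support of [a] are dropped, since
   [Defs.lift] demands positive weights. *)
Definition reweight a s : seq (R * Conf * dist R Conf) :=
  [seq (t.1.1 * (a t.1.2 / lift_src s t.1.2), t.1.2, t.2) | t <- s & a t.1.2 != 0].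

Lemma sum_reweight a s (H : Conf -> dist R Conf -> R) :
  \sum_(t <- reweight a s) t.1.1 * H t.1.2 t.2 =
  \sum_(t <- s) t.1.1 * (a t.1.2 / lift_src s t.1.2) * H t.1.2 t.2.
Proof.
rewrite big_map big_filter /=; apply: big_rmcond => t /negPn/eqP ->.
by rewrite mul0r mulr0 mul0r.
Qed.

Lemma lift_src_reweight a s :
  (forall x, a x != 0 -> lift_src s x != 0) -> lift_src (reweight a s) = a.
Proof.
move=> aM; apply: funext => x.
rewrite [LHS]/lift_src /mix (sum_reweight a s (fun c _ => dirac R c x)).
transitivity (lift_src s x * (a x / lift_src s x)).
  rewrite /lift_src {3}/mix mulr_suml; apply: eq_bigr => t _.
  by rewrite /dirac; case: eqVneq => [->|_]; rewrite ?mulr1 ?mulr0 ?mul0r.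
have [M0|MN0] := eqVneq (lift_src s x) 0; last by rewrite mulrC divfK.
suff -> : a x = 0 by rewrite mul0r mulr0.
by move: (aM x); rewrite M0 eqxx; case: eqP => // _ /(_ isT).
Qed.

Lemma lift_reweight a s :
  (forall t, t \in s -> 0 < t.1.1) -> (forall t, t \in s -> step t.1.2 pi t.2) ->
  is_dist a -> (forall x, a x != 0 -> lift_src s x != 0) ->
  Defs.lift step pi a (lift_tgt (reweight a s)).
Proof.
move=> w0 steps da aM; have [a0 _ suma] := da.
exists (reweight a s); split => //.
- move=> u /mapP[t]; rewrite mem_filter => /andP[act ts] -> /=.
  have Mt : 0 < lift_src s t.1.2 by apply: mix_gt0.
  by rewrite mulr_gt0 ?divr_gt0 ?w0 // lt0r act a0.
- by rewrite -(fsum_mix _ _ (fun t => t.1.2)) -[RHS]suma -[in RHS](lift_src_reweight aM).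
- by move=> u /mapP[t]; rewrite mem_filter => /andP[_ ts] -> /=; apply: steps.
- exact: esym (lift_src_reweight aM).
Qed.

Lemma lift_cvx_decompose q a b E :
  0 < q < 1 -> is_dist a -> is_dist b -> Defs.lift step pi (cvx q a b) E ->
  exists E1 E2, [/\ Defs.lift step pi a E1, Defs.lift step pi b E2 & E = cvx q E1 E2].
Proof.
move=> /andP[q0 q1] da db [s [w0 _ steps Ms ->]].
have Mcvx : lift_src s = cvx q a b by rewrite Ms.
have [a0 _ _] := da; have [b0 _ _] := db.
have q'0 : 0 < 1 - q by rewrite subr_gt0.
have supp_a x : a x != 0 -> lift_src s x != 0.
  move=> ax; rewrite Mcvx gt_eqF // ltr_wpDr ?(mulr_ge0 (ltW q'0)) //.
  by rewrite mulr_gt0 // lt0r ax a0.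
have supp_b x : b x != 0 -> lift_src s x != 0.
  move=> bx; rewrite Mcvx gt_eqF // ltr_wpDl ?(mulr_ge0 (ltW q0)) //.
  by rewrite mulr_gt0 // lt0r bx b0.
exists (lift_tgt (reweight a s)), (lift_tgt (reweight b s)).
split; [exact: lift_reweight | exact: lift_reweight |].
apply: funext => x; rewrite /cvx /lift_tgt !(sum_reweight _ s (fun _ T => T x)).
rewrite !mulr_sumr -big_split /=; apply: eq_big_seq => t ts.
have : 0 < lift_src s t.1.2 by apply: mix_gt0.
rewrite Mcvx /cvx => /gt_eqF/negbT M0.
by field.
Qed.

End Lift.

End Distributions.

Section Determinism.
Variables (R : realType) (Conf : choiceType) (Ctx Idx : Type).
Variables (plug : Ctx -> Conf -> Conf) (step : Conf -> Idx -> dist R Conf -> Prop).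
Variables (bisim : dist R Conf -> dist R Conf -> Prop).
Hypothesis bisim_lin : bisim_linear bisim.

Definition cvx_set (A1 A2 : set (dist R Conf)) : set (dist R Conf) :=
  [set E | exists q D T, [/\ 0 <= q <= 1, A1 D, A2 T & E = cvx q D T]].

Lemma deterministic_set_cvx A1 A2 :
  deterministic_set plug step bisim A1 -> deterministic_set plug step bisim A2 ->
  deterministic_set plug step bisim (cvx_set A1 A2).
Proof.
move=> [A1d A1det] [A2d A2det]; split.
  by move=> _ [q [D [T [q01 /A1d dD /A2d dT ->]]]]; exact: is_dist_cvx.
move=> _ [q [D [T [q01 A1D A2T ->]]]] O pi E1 E2.
have subA1 : A1 `<=` cvx_set A1 A2 by move=> E A1E; exists 1, E, T; rewrite cvx1 lexx ler01.
have subA2 : A2 `<=` cvx_set A1 A2 by move=> E A2E; exists 0, D, E; rewrite cvx0 lexx ler01.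
have [->|q0] := eqVneq q 0.
  rewrite cvx0 => l1 l2; have [b12 A2E1 A2E2] := A2det _ A2T O pi _ _ l1 l2.
  by split => //; apply: subA2.
have [->|q1] := eqVneq q 1.
  rewrite cvx1 => l1 l2; have [b12 A1E1 A1E2] := A1det _ A1D O pi _ _ l1 l2.
  by split => //; apply: subA1.
have q01' : 0 < q < 1 by rewrite !lt_def q0 eq_sym q1.
have dD := A1d _ A1D; have dT := A2d _ A2T.
have [_ finD _] := dD; have [_ finT _] := dT.
have dOD := is_dist_push plug O dD; have dOT := is_dist_push plug O dT.
rewrite push_cvx // => l1 l2.
have [D1 [T1 [lD1 lT1 ->]]] := lift_cvx_decompose q01' dOD dOT l1.
have [D2 [T2 [lD2 lT2 ->]]] := lift_cvx_decompose q01' dOD dOT l2.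
have [bD AD1 AD2] := A1det _ A1D O pi _ _ lD1 lD2.
have [bT AT1 AT2] := A2det _ A2T O pi _ _ lT1 lT2.
split; [exact: bisim_lin | by exists q, D1, T1 | by exists q, D2, T2].
Qed.

End Determinism.

Theorem lemmaC8 (R : realType) (Conf : choiceType) (Ctx Idx : Type)
  (plug : Ctx -> Conf -> Conf) (step : Conf -> Idx -> dist R Conf -> Prop)
  (bisim : dist R Conf -> dist R Conf -> Prop)
  (Hlin : bisim_linear bisim)
  (D T : dist R Conf) (p : R) :
  0 <= p <= 1 ->
  deterministic plug step bisim D ->
  deterministic plug step bisim T ->
  deterministic plug step bisim (cvx p D T).
Proof.
move=> p01 [A1 [detA1 A1D]] [A2 [detA2 A2T]].
exists (cvx_set A1 A2); split; first exact: (deterministic_set_cvx Hlin).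
by exists p, D, T.
Qed.
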